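(* Let $\mathcal A$ be a commutative semiring and $\mathcal W$ a semialgebra over $\mathcal A$ with a surpassing relation $\preceq$, and suppose $\mathcal W$ is affine over $\mathcal A$. Let $\mathcal K\subseteq\mathcal W$ be a central sub-semialgebra containing $\mathcal A$ such that $\mathcal W$ has a finite $\preceq$-base $B$ over $\mathcal K$. Then $\mathcal K$ is affine over $\mathcal A$.
   Context: A surpassing relation is a partial preorder $\preceq$ compatible with addition and with multiplication by elements. For a sub-semialgebra $\mathcal K$ containing $\mathcal A$ and $y_1,\dots,y_n$, $\mathcal A[y_1,\dots,y_n]$ denotes the $\mathcal A$-sub-semialgebra they generate. $\mathcal W$ (resp. $\mathcal K$) is affine over $\mathcal A$ if there are finitely many $y_1,\dots,y_n\in\mathcal W$ (resp. in $\mathcal K$) such that for every $w\in\mathcal W$ (resp. $w\in\mathcal K$) there is $w'\in\mathcal A[y_1,\dots,y_n]$ with $w'\preceq w$. $\mathcal K$ is central if $kw=wk$ for all $k\in\mathcal K$, $w\in\mathcal W$. A set $B$ $\preceq$-spans $\mathcal W$ over $\mathcal K$ if every $v\in\mathcal W$ satisfies $\sum_i k_ib_i\preceq v$ for some $k_i\in\mathcal K$, $b_i\in B$; $B$ is $\preceq$-independent over $\mathcal K$ if for distinct $b_i\in B$, $\sum k_ib_i\preceq\sum k_i'b_i$ with $k_i,k_i'\in\mathcal K$ implies $k_i\preceq k_i'$ for all $i$; a $\preceq$-base over $\mathcal K$ is a $\preceq$-independent $\preceq$-spanning set. *)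

From HB Require Import structures.
From mathcomp Require Import all_boot all_order all_algebra.
Set Implicit Arguments. Unset Strict Implicit. Unset Printing Implicit Defensive.
Import GRing.Theory.
Local Open Scope ring_scope.

Section Surpassing.
Variables (A : comPzSemiRingType) (W : semiAlgType A).

Definition surpassing (le : W -> W -> Prop) : Prop :=
  [/\ (forall x, le x x),
      (forall x y z, le x y -> le y z -> le x z),
      (forall x y c, le x y -> le (x + c) (y + c)),
      (forall x y c, le x y -> le (c * x) (c * y)) &
      (forall x y c, le x y -> le (x * c) (y * c))].

Definition subsemialg (K : W -> Prop) : Prop :=
  [/\ K 0, K 1,
      (forall x y, K x -> K y -> K (x + y)),
      (forall x y, K x -> K y -> K (x * y)) &
      (forall (a : A) x, K x -> K (a *: x))].

Definition contains_A (K : W -> Prop) : Prop := forall a : A, K (a%:A).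

Definition central (K : W -> Prop) : Prop :=
  forall k w, K k -> k * w = w * k.

Inductive gen_subsemialg (ys : seq W) : W -> Prop :=
  | gen_y : forall y, y \in ys -> gen_subsemialg ys y
  | gen_A : forall a : A, gen_subsemialg ys (a%:A)
  | gen_add : forall x y, gen_subsemialg ys x -> gen_subsemialg ys y ->
      gen_subsemialg ys (x + y)
  | gen_mul : forall x y, gen_subsemialg ys x -> gen_subsemialg ys y ->
      gen_subsemialg ys (x * y)
  | gen_scale : forall (a : A) x, gen_subsemialg ys x ->
      gen_subsemialg ys (a *: x).

Definition affine_over (le : W -> W -> Prop) (S : W -> Prop) : Prop :=
  exists ys : seq W, (forall y, y \in ys -> S y) /\
    forall w, S w -> exists2 w', gen_subsemialg ys w' & le w' w.

Definition le_spans (le : W -> W -> Prop) (K : W -> Prop) n (b : 'I_n -> W) :=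
  forall v : W, exists k : 'I_n -> W,
    (forall i, K (k i)) /\ le (\sum_(i < n) k i * b i) v.

Definition le_independent (le : W -> W -> Prop) (K : W -> Prop) n
    (b : 'I_n -> W) :=
  forall k k' : 'I_n -> W, (forall i, K (k i)) -> (forall i, K (k' i)) ->
    le (\sum_(i < n) k i * b i) (\sum_(i < n) k' i * b i) ->
    forall i, le (k i) (k' i).

Definition le_base (le : W -> W -> Prop) (K : W -> Prop) n (b : 'I_n -> W) :=
  [/\ injective b, le_spans le K b & le_independent le K b].

End Surpassing.

(* Write W = A[Y] up to surpassing and choose K-coefficients, over the base b,
   for 1, for the generators y in Y and for all products b_i b_j; let ys be
   the finite list of these coefficients.  Since K is central, every element
   of A[Y], hence every element of W, surpasses a combination sum_i e_i b_i
   with all e_i in A[ys].  For k in K, applying this to k b_0 and comparing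
   coefficients by independence gives e_0 <= k with e_0 in A[ys]. *)

From HB Require Import structures.
From mathcomp Require Import all_boot all_order all_algebra.
Set Implicit Arguments. Unset Strict Implicit. Unset Printing Implicit Defensive.
Import GRing.Theory.
Local Open Scope ring_scope.

Section SurpassingTheory.
Variables (A : comPzSemiRingType) (W : semiAlgType A) (le : W -> W -> Prop).
Hypothesis surp : surpassing le.

Lemma surp_refl x : le x x.
Proof. by case: surp. Qed.

Lemma surp_trans x y z : le x y -> le y z -> le x z.
Proof. by case: surp => _ trans _ _ _; apply: trans. Qed.

Lemma surpD x y x' y' : le x y -> le x' y' -> le (x + x') (y + y').
Proof.
case: surp => _ _ addr _ _ lexy lexy'; apply: (surp_trans (addr _ _ x' lexy)).
by rewrite ![y + _]addrC; apply: addr.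
Qed.

Lemma surpMl c x y : le x y -> le (c * x) (c * y).
Proof. by case: surp => _ _ _ mull _; apply: mull. Qed.

Lemma surpM x y x' y' : le x y -> le x' y' -> le (x * x') (y * y').
Proof.
case: surp => _ _ _ _ mulr lexy lexy'.
exact: (surp_trans (mulr _ _ x' lexy) (surpMl _ lexy')).
Qed.

Lemma surpZ (a : A) x y : le x y -> le (a *: x) (a *: y).
Proof. by move=> lexy; rewrite -[x]mul1r -[y]mul1r !scalerAl; apply: surpMl. Qed.

Lemma surp_sum n (F G : 'I_n -> W) : (forall i, le (F i) (G i)) ->
  le (\sum_(i < n) F i) (\sum_(i < n) G i).
Proof.
by move=> leFG; apply: (big_ind2 le) => // [|*]; [apply: surp_refl|apply: surpD].
Qed.

End SurpassingTheory.

Section GeneratedSubsemialgebra.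
Variables (A : comPzSemiRingType) (W : semiAlgType A).

Lemma gen_subsemialg0 (ys : seq W) : gen_subsemialg ys 0.
Proof. by have := gen_A ys 0; rewrite scale0r. Qed.

Lemma gen_subsemialg_min (K : W -> Prop) (ys : seq W) :
  subsemialg K -> (forall y, y \in ys -> K y) ->
  forall x, gen_subsemialg ys x -> K x.
Proof.
case=> _ K1 KD KM KZ ysK x; elim=> [y /ysK //|a|||] *; last 3 first.
- exact: KD.
- exact: KM.
- exact: KZ.
by rewrite -[_%:A]/(a *: 1); apply: KZ.
Qed.

End GeneratedSubsemialgebra.

Section Combinations.
Variables (A : comPzSemiRingType) (W : semiAlgType A) (le : W -> W -> Prop).
Variables (n : nat) (b : 'I_n -> W).

(* [le_spans le K b] unfolds to [forall v, le_combination K v]. *)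
Definition le_combination (P : W -> Prop) (w : W) : Prop :=
  exists e : 'I_n -> W, (forall i, P (e i)) /\ le (\sum_(i < n) e i * b i) w.

Lemma le_combination_sub (P Q : W -> Prop) w :
  (forall x, P x -> Q x) -> le_combination P w -> le_combination Q w.
Proof. by move=> PQ [e [Pe lew]]; exists e; split=> // i; apply: PQ. Qed.

Lemma le_spans_finite (K : W -> Prop) (V : seq W) : le_spans le K b ->
  exists ys : seq W, (forall y, y \in ys -> K y) /\
    forall v, v \in V -> le_combination (fun x => x \in ys) v.
Proof.
move=> span; elim: V => [|v V [ys [ysK ysV]]]; first by exists [::].
have [e [Ke lev]] := span v.
exists ([seq e i | i <- enum 'I_n] ++ ys); split.
  by move=> y; rewrite mem_cat => /orP[/mapP[i _ ->]|/ysK].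
move=> u; rewrite inE => /predU1P[->|/ysV]; last first.
  by apply: le_combination_sub => x xys; rewrite mem_cat xys orbT.
by exists e; split=> // i; rewrite mem_cat map_f ?mem_enum.
Qed.

Hypothesis surp : surpassing le.

Lemma le_combination_surp (P : W -> Prop) w v :
  le_combination P w -> le w v -> le_combination P v.
Proof.
by move=> [e [Pe lew]] lewv; exists e; split; last exact: (surp_trans surp lew lewv).
Qed.

Lemma le_independent_coef (K : W -> Prop) (e : 'I_n -> W) k i0 :
  le_independent le K b -> K 0 -> K k -> (forall i, K (e i)) ->
  le (\sum_(i < n) e i * b i) (k * b i0) -> le (e i0) k.
Proof.
move=> indep K0 Kk Ke le_ek.
pose k' i := if i == i0 then k else 0.
have Kk' i : K (k' i) by rewrite /k'; case: eqP.
have := indep e k' Ke Kk' _ i0; rewrite /k' eqxx; apply.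
apply: (surp_trans surp le_ek).
rewrite (bigD1 i0) //= eqxx big1 ?addr0 => [|i /negPf->]; last by rewrite mul0r.
exact: surp_refl.
Qed.

Section Closure.
Variable P : W -> Prop.
Hypotheses (P0 : P 0) (PD : forall x y, P x -> P y -> P (x + y)).
Hypotheses (PM : forall x y, P x -> P y -> P (x * y)).
Hypotheses (PZ : forall (a : A) x, P x -> P (a *: x)).
Hypothesis P_central : forall k w, P k -> k * w = w * k.

Lemma P_sum m (F : 'I_m -> W) : (forall i, P (F i)) -> P (\sum_(i < m) F i).
Proof. by move=> PF; apply: (big_ind P). Qed.

Lemma le_combinationD w1 w2 :
  le_combination P w1 -> le_combination P w2 -> le_combination P (w1 + w2).
Proof.
move=> [e1 [Pe1 le1]] [e2 [Pe2 le2]]; exists (fun i => e1 i + e2 i).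
split=> [i|]; first exact: PD.
by under eq_bigr do rewrite mulrDl; rewrite big_split; apply: surpD.
Qed.

Lemma le_combinationZ (a : A) w :
  le_combination P w -> le_combination P (a *: w).
Proof.
move=> [e [Pe lew]]; exists (fun i => a *: e i); split=> [i|]; first exact: PZ.
by under eq_bigr do rewrite -scalerAl; rewrite -scaler_sumr; apply: surpZ.
Qed.

Lemma le_combinationM w1 w2 :
  (forall i j, le_combination P (b i * b j)) ->
  le_combination P w1 -> le_combination P w2 -> le_combination P (w1 * w2).
Proof.
move=> prod_comb [e1 [Pe1 le1]] [e2 [Pe2 le2]].
have /fin_all_exists[c c_spec] i : exists ci : 'I_n -> 'I_n -> W, forall j,
    (forall l, P (ci j l)) /\ le (\sum_(l < n) ci j l * b l) (b i * b j).
  exact: (fin_all_exists (prod_comb i)).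
exists (fun l => \sum_(i < n) \sum_(j < n) e1 i * e2 j * c i j l); split.
  move=> l; do 2![apply: P_sum => ?].
  by apply: PM; [apply: PM; [apply: Pe1|apply: Pe2]|apply: (proj1 (c_spec _ _))].
apply: (surp_trans surp _ (surpM surp le1 le2)).
have -> : (\sum_(i < n) e1 i * b i) * (\sum_(j < n) e2 j * b j) =
    \sum_(i < n) \sum_(j < n) e1 i * e2 j * (b i * b j).
  rewrite mulr_suml; apply: eq_bigr => i _; rewrite mulr_sumr.
  apply: eq_bigr => j _.
  by rewrite -!mulrA (mulrA (b i)) -(P_central _ (Pe2 j)) !mulrA.
rewrite (eq_bigr (fun l => \sum_(i < n) \sum_(j < n) e1 i * e2 j * c i j l * b l));
  last by move=> l _; rewrite mulr_suml; apply: eq_bigr => i _; rewrite mulr_suml.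
rewrite exchange_big; apply: (surp_sum surp) => i /=.
rewrite exchange_big; apply: (surp_sum surp) => j /=.
under eq_bigr do rewrite -mulrA.
by rewrite -mulr_sumr; apply: (surpMl surp); case: (c_spec i j).
Qed.

Lemma le_combination_gen (Y : seq W) w :
  le_combination P 1 -> (forall y, y \in Y -> le_combination P y) ->
  (forall i j, le_combination P (b i * b j)) ->
  gen_subsemialg Y w -> le_combination P w.
Proof.
move=> comb1 combY prod_comb; elim=> [y /combY //|a|||] *.
- exact: (le_combinationZ _ comb1).
- exact: le_combinationD.
- exact: le_combinationM.
- exact: le_combinationZ.
Qed.

End Closure.
End Combinations.

Lemma le_combination_affine (A : comPzSemiRingType) (W : semiAlgType A)
    (le : W -> W -> Prop) (K : W -> Prop) (ys : seq W) n (b : 'I_n -> W) :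
  surpassing le -> subsemialg K -> (forall y, y \in ys -> K y) ->
  le_independent le K b ->
  (forall v, le_combination le b (gen_subsemialg ys) v) -> affine_over le K.
Proof.
move=> surp K_subalg ysK indep comb; exists ys; split=> // k Kk.
case: n b indep comb => [|n] b indep comb.
  exists 0; first exact: gen_subsemialg0.
  by have [e [_]] := comb k; rewrite big_ord0.
have [e [gen_e le_ek]] := comb (k * b ord0).
exists (e ord0) => //; apply: (le_independent_coef surp indep _ Kk _ le_ek).
- by case: K_subalg.
- by move=> i; apply: (gen_subsemialg_min K_subalg ysK).
Qed.

Theorem mainTheorem10 (A : comPzSemiRingType) (W : semiAlgType A)
  (le : W -> W -> Prop) (K : W -> Prop) :
  surpassing le ->
  affine_over le (fun _ : W => True) ->
  subsemialg K -> contains_A K -> central K ->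
  (exists (n : nat) (b : 'I_n -> W), le_base le K b) ->
  affine_over le K.
Proof.
move=> surp [Y [_ affW]] K_subalg _ K_central [n [b [_ span indep]]].
pose V := 1 :: Y ++ [seq b i * b j | i <- enum 'I_n, j <- enum 'I_n].
have [ys [ysK combV]] := le_spans_finite V span.
have gen_central k w : gen_subsemialg ys k -> k * w = w * k.
  by move=> /(gen_subsemialg_min K_subalg ysK) Kk; apply: K_central.
have combV' v : v \in V -> le_combination le b (gen_subsemialg ys) v.
  by move=> /combV; apply: le_combination_sub => y; apply: gen_y.
apply: (le_combination_affine surp K_subalg ysK indep) => v.
have [w genYw le_wv] := affW v I.
apply: (le_combination_surp surp _ le_wv).
apply: (le_combination_gen surp (gen_subsemialg0 ys) (@gen_add _ _ ys)
  (@gen_mul _ _ ys) (@gen_scale _ _ ys) gen_central _ _ _ genYw).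
- by apply: combV'; rewrite inE eqxx.
- by move=> y Yy; apply: combV'; rewrite inE mem_cat Yy orbT.
- move=> i j; apply: combV'; rewrite inE mem_cat; apply/orP; right; apply/orP; right.
  by apply/allpairsP; exists (i, j); rewrite !mem_enum.
Qed.
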